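(* Let $A$ be a $k$-algebra. If $V$ is any irreducible $A$-module, then the underlying $A_{\mathbb{C}}$-module $V_{\mathbb{C}}$ (obtained by forgetting the action of $k$) is an irreducible $A_{\mathbb{C}}$-module.
   Context: $k=\mathcal{O}(X)$ is the coordinate algebra of a complex affine variety $X$. A $k$-algebra is a (not necessarily unital or commutative) $\mathbb{C}$-algebra $A$ which is a unital left $k$-module with $\lambda(\omega a)=\omega(\lambda a)=(\lambda\omega)a$ and $\omega(a_1a_2)=(\omega a_1)a_2=a_1(\omega a_2)$. An $A$-module is a complex vector space $V$ with algebra morphisms $A\to\mathrm{Hom}_{\mathbb{C}}(V,V)$ and a unital $k\to\mathrm{Hom}_{\mathbb{C}}(V,V)$ such that $(\omega a)v=\omega(av)=a(\omega v)$; it is irreducible if $AV\neq\{0\}$ and there is no subspace $W$ with $\{0\}\neq W\neq V$ stable under both $A$ and $k$. $A_{\mathbb{C}}$ is $A$ with the $k$-action forgotten; an $A_{\mathbb{C}}$-module $V$ is irreducible if $A_{\mathbb{C}}V\neq\{0\}$ and there is no $A_{\mathbb{C}}$-stable subspace $W$ with $\{0\}\neq W\neq V$. *)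

(* The field of complex numbers is modelled as R[i] for an
   arbitrary real-number structure R : realType. *)
From HB Require Import structures.
From mathcomp Require Import all_boot all_order all_algebra.
From mathcomp Require Import complex.
From mathcomp Require Import reals.
Set Implicit Arguments. Unset Strict Implicit. Unset Printing Implicit Defensive.
Import Order.TTheory GRing.Theory Num.Theory.
Local Open Scope ring_scope.

Section Defs.
Variable C : fieldType.

Definition subalg_closed_P (k : comAlgType C) (P : k -> Prop) : Prop :=
  [/\ P 1, (forall x y, P x -> P y -> P (x + y)),
      (forall x y, P x -> P y -> P (x * y)) &
      (forall (l : C) x, P x -> P (l *: x))].

Definition finitely_generated (k : comAlgType C) : Prop :=
  exists s : seq k, forall P : k -> Prop,
    subalg_closed_P P -> (forall x, x \in s -> P x) -> forall x, P x.

Definition reduced (k : comAlgType C) : Prop :=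
  forall (x : k) (n : nat), x ^+ n = 0 -> x = 0.

Definition coordinate_algebra (k : comAlgType C) : Prop :=
  finitely_generated k /\ reduced k.

Variable k : comAlgType C.

(* A k-algebra: a (not necessarily unital nor commutative) C-algebra A,
   given by a C-vector space with a multiplication, together with a unital
   left k-module structure [act] compatible with everything. *)
Definition k_algebra (A : lmodType C) (mul : A -> A -> A) (act : k -> A -> A)
  : Prop :=
  (
      (forall a b c, mul (mul a b) c = mul a (mul b c)) /\
      (forall a b c, mul (a + b) c = mul a c + mul b c) /\
      (forall a b c, mul a (b + c) = mul a b + mul a c) /\
      (forall (l : C) a b, mul (l *: a) b = l *: mul a b) /\
      (forall (l : C) a b, mul a (l *: b) = l *: mul a b) /\
      (forall a, act 1 a = a) /\
      (forall w1 w2 a, act (w1 * w2) a = act w1 (act w2 a)) /\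
      (forall w1 w2 a, act (w1 + w2) a = act w1 a + act w2 a) /\
      (forall w a b, act w (a + b) = act w a + act w b) /\
      (forall (l : C) w a, l *: act w a = act w (l *: a)) /\
      (forall (l : C) w a, l *: act w a = act (l *: w) a) /\
      (forall w a b, act w (mul a b) = mul (act w a) b) /\
      (forall w a b, act w (mul a b) = mul a (act w b))).

Definition AC_module (A : lmodType C) (mul : A -> A -> A)
  (V : lmodType C) (rho : A -> V -> V) : Prop :=
  [/\ (forall a (l : C) u v, rho a (l *: u + v) = l *: rho a u + rho a v),
      (forall (l : C) a b v, rho (l *: a + b) v = l *: rho a v + rho b v) &
      (forall a b v, rho (mul a b) v = rho a (rho b v))].

Definition A_module (A : lmodType C) (mul : A -> A -> A) (act : k -> A -> A)
  (V : lmodType C) (rho : A -> V -> V) (sigma : k -> V -> V) : Prop :=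
  (AC_module mul rho /\
      (forall w (l : C) u v, sigma w (l *: u + v) = l *: sigma w u + sigma w v) /\
      (forall (l : C) w1 w2 v,
          sigma (l *: w1 + w2) v = l *: sigma w1 v + sigma w2 v) /\
      (forall w1 w2 v, sigma (w1 * w2) v = sigma w1 (sigma w2 v)) /\
      (forall v, sigma 1 v = v) /\
      (forall w a v, rho (act w a) v = sigma w (rho a v)) /\
      (forall w a v, rho (act w a) v = rho a (sigma w v))).

Definition subspace (V : lmodType C) (W : V -> Prop) : Prop :=
  W 0 /\ forall (l : C) u v, W u -> W v -> W (l *: u + v).

Definition acts_nontrivially (A V : lmodType C) (rho : A -> V -> V) : Prop :=
  exists a v, rho a v <> 0.

Definition trivial_subspace (V : lmodType C) (W : V -> Prop) : Prop :=
  (forall v, W v -> v = 0) \/ (forall v, W v).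

Definition irreducible_A_module (A V : lmodType C)
  (rho : A -> V -> V) (sigma : k -> V -> V) : Prop :=
  acts_nontrivially rho /\
  forall W : V -> Prop, subspace W ->
    (forall a v, W v -> W (rho a v)) ->
    (forall w v, W v -> W (sigma w v)) ->
    trivial_subspace W.

End Defs.

Definition irreducible_AC_module (C : fieldType) (A V : lmodType C)
  (rho : A -> V -> V) : Prop :=
  acts_nontrivially rho /\
  forall W : V -> Prop, subspace W ->
    (forall a v, W v -> W (rho a v)) ->
    trivial_subspace W.

From HB Require Import structures.
From mathcomp Require Import all_boot all_order all_algebra.
From mathcomp Require Import complex.
From mathcomp Require Import reals.
Set Implicit Arguments. Unset Strict Implicit. Unset Printing Implicit Defensive.
Import Order.TTheory GRing.Theory Num.Theory.
Local Open Scope ring_scope.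

(* Let W be an A-stable subspace of V. The largest k-stable subspace
   X = {v | k v ⊆ W} of W is A- and k-stable, so X = 0 or X = V. If X = V
   then W = V. If X = 0, then A W ⊆ X = 0, so W lies in the annihilator
   {v | A v = 0}; this is again A- and k-stable and is not V because
   A V ≠ 0, hence it is 0 and so is W. *)

Lemma additive_scale_map0 (F : fieldType) (V : lmodType F) (f : V -> V) :
  (forall (l : F) u v, f (l *: u + v) = l *: f u + f v) -> f 0 = 0.
Proof.
move=> f_lin; have := f_lin 1 0 0; rewrite !scale1r !addr0 => f00.
by apply: (addrI (f 0)); rewrite addr0.
Qed.

Section ForgetCoefficientAction.

Variables (C : fieldType) (k : comAlgType C) (A V : lmodType C).
Variables (act : k -> A -> A) (rho : A -> V -> V) (sigma : k -> V -> V).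

Hypothesis rho_lin :
  forall a (l : C) u v, rho a (l *: u + v) = l *: rho a u + rho a v.
Hypothesis sigma_lin :
  forall w (l : C) u v, sigma w (l *: u + v) = l *: sigma w u + sigma w v.
Hypothesis sigmaM : forall w1 w2 v, sigma (w1 * w2) v = sigma w1 (sigma w2 v).
Hypothesis sigma1 : forall v, sigma 1 v = v.
Hypothesis rho_act_sigmaL : forall w a v, rho (act w a) v = sigma w (rho a v).
Hypothesis rho_act_sigmaR : forall w a v, rho (act w a) v = rho a (sigma w v).

Definition k_core (W : V -> Prop) : V -> Prop := fun v => forall w, W (sigma w v).

Definition annihilator : V -> Prop := fun v => forall a, rho a v = 0.

Lemma k_core_sub W v : k_core W v -> W v.
Proof. by move/(_ 1); rewrite sigma1. Qed.

Lemma subspace_k_core W : subspace W -> subspace (k_core W).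
Proof.
case=> W0 W_lin; split=> [w|l u v Xu Xv w].
  by rewrite (additive_scale_map0 (sigma_lin w)).
by rewrite sigma_lin; apply: W_lin.
Qed.

Lemma k_core_sigma_stable W w v : k_core W v -> k_core W (sigma w v).
Proof. by move=> Xv w'; rewrite -sigmaM. Qed.

Lemma rho_in_k_core W a v :
  (forall b u, W u -> W (rho b u)) -> W v -> k_core W (rho a v).
Proof. by move=> W_rho Wv w; rewrite -rho_act_sigmaL; apply: W_rho. Qed.

Lemma subspace_annihilator : subspace annihilator.
Proof.
split=> [a|l u v Uu Uv a]; first exact: additive_scale_map0 (rho_lin a).
by rewrite rho_lin Uu Uv scaler0 addr0.
Qed.

Lemma annihilator_rho_stable a v : annihilator v -> annihilator (rho a v).
Proof. by move=> Uv b; rewrite Uv (additive_scale_map0 (rho_lin b)). Qed.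

Lemma annihilator_sigma_stable w v : annihilator v -> annihilator (sigma w v).
Proof. by move=> Uv a; rewrite -rho_act_sigmaR. Qed.

Lemma irreducible_forget_k_action :
  irreducible_A_module rho sigma -> irreducible_AC_module rho.
Proof.
case=> A_nontriv irr; split=> // W W_sub W_rho.
have [X0|XT] : trivial_subspace (k_core W).
  apply: irr; [exact: subspace_k_core | | exact: k_core_sigma_stable].
  by move=> a v /k_core_sub Wv; apply: rho_in_k_core.
- have [U0|UT] := irr _ subspace_annihilator annihilator_rho_stable
                     annihilator_sigma_stable.
    by left=> v Wv; apply: U0 => a; apply: X0; apply: rho_in_k_core.
  by case: A_nontriv => a [v]; rewrite UT.
- by right=> v; apply: k_core_sub.
Qed.

End ForgetCoefficientAction.

Theorem lemma3p3 (R : realType) (k : comAlgType R[i])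
  (hk : coordinate_algebra k)
  (A : lmodType R[i]) (mul : A -> A -> A) (act : k -> A -> A)
  (hA : k_algebra mul act)
  (V : lmodType R[i]) (rho : A -> V -> V) (sigma : k -> V -> V)
  (hV : A_module mul act rho sigma)
  (hirr : irreducible_A_module rho sigma) :
  irreducible_AC_module rho.
Proof.
case: hV => [[rho_lin _ _] [sigma_lin [_ [sigmaM [sigma1 [rhoL rhoR]]]]]].
exact: (@irreducible_forget_k_action _ k A V act rho sigma
          rho_lin sigma_lin sigmaM sigma1 rhoL rhoR hirr).
Qed.
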